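(* Let $n\ge1$, $T\in M(n;\mathbb{C})$ non-singular with $\mathrm{Im}\,T$ positive definite, and $(r,A,p,q)\in\mathbb{N}\times M(n;\mathbb{Z})\times\mathbb{R}^n\times\mathbb{R}^n$. Then the pair $\mathscr{L}_{(r,A,p,q)}=(L_{(r,A,p)},\mathcal{L}_{(r,A,p,q)})$ is an object of the Fukaya category of $\check{T}^{2n}_{J=T}$ (i.e. $L_{(r,A,p)}$ is a Lagrangian submanifold of $(T^{2n},\omega)$ and the curvature of the connection of $\mathcal{L}_{(r,A,p,q)}$ equals $2\pi\mathbf{i}\,B|_{L_{(r,A,p)}}$) if and only if $AT=(AT)^t$.
   Context: $\check{T}^{2n}_{J=T}$ is the real torus $T^{2n}=\mathbb{R}^{2n}/2\pi\mathbb{Z}^{2n}$ with coordinates $(\check x,\check y)=(x^1,\dots,x^n,y^1,\dots,y^n)$ and complexified symplectic form $\tilde\omega=d\check x^t(-T^{-1})^td\check y$, where $d\check x=(dx^1,\dots,dx^n)^t$, $d\check y=(dy^1,\dots,dy^n)^t$; write $\tilde\omega=d\check x^t\omega\, d\check y+\mathbf{i}\,d\check x^tB\,d\check y$ with $\omega:=\mathrm{Im}(-T^{-1})^t$, $B:=\mathrm{Re}(-T^{-1})^t$ (also viewed as the $2$-forms $d\check x^t\omega d\check y$ and $d\check x^tBd\check y$). An object of the Fukaya category is a pair $(L,\mathcal{L})$ with $L$ a Lagrangian submanifold for $\omega$ and $\mathcal{L}\to L$ a complex line bundle with connection whose curvature is $2\pi\mathbf{i}B|_L$. Here $L_{(r,A,p)}$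 is the image under $\mathbb{R}^{2n}\to T^{2n}$ of $\{(\check x,\check y):\check y=\frac1rA\check x+\frac1rp\}$, and $\mathcal{L}_{(r,A,p,q)}\to L_{(r,A,p)}$ is the trivial line bundle with flat connection $d-\frac{\mathbf{i}}{2\pi}\frac1rq^td\check x$. *)

From HB Require Import structures.
From mathcomp Require Import all_boot all_order all_algebra.
From mathcomp Require Import all_classical all_reals all_analysis.
From mathcomp Require Import complex.
Set Implicit Arguments. Unset Strict Implicit. Unset Printing Implicit Defensive.
Import Order.TTheory GRing.Theory Num.Theory.
Import numFieldNormedType.Exports.
Local Open Scope ring_scope.

Section Defs.
Variable R : realType.
Variable n : nat.

Definition ebasis (j : 'I_n) : 'cV[R]_n := delta_mx j 0.

Definition re_mx (M : 'M[R[i]]_n) : 'M[R]_n := map_mx (@complex.Re R) M.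
Definition im_mx (M : 'M[R[i]]_n) : 'M[R]_n := map_mx (@complex.Im R) M.

Definition posdef (M : 'M[R]_n) : Prop :=
  forall v : 'cV[R]_n, v != 0 -> 0 < (v^T *m M *m v) 0 0.

Definition omega_mx (T : 'M[R[i]]_n) : 'M[R]_n := im_mx ((- invmx T)^T).
Definition B_mx (T : 'M[R[i]]_n) : 'M[R]_n := re_mx ((- invmx T)^T).

(* The constant 2-form  dx^t M dy  on R^{2n} (coordinates (x,y)), evaluated on
   two tangent vectors X = (X.1, X.2), Y = (Y.1, Y.2):
   sum_{j,k} M_{jk} (dx^j /\ dy^k)(X,Y) = X.1^t M Y.2 - Y.1^t M X.2. *)
Definition twoform (M : 'M[R]_n) (X Y : 'cV[R]_n * 'cV[R]_n) : R :=
  (X.1^T *m M *m Y.2 - Y.1^T *m M *m X.2) 0 0.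

(* A (lifted) n-dimensional submanifold of T^{2n}, given by a parametrization
   phi : R^n -> R^{2n} (coordinates x on the submanifold).  It is Lagrangian for
   the symplectic form dx^t w dy iff phi is an immersion (so the submanifold has
   half dimension n) and the pull-back of the form vanishes identically. *)
Definition is_Lagrangian (w : 'M[R]_n)
  (phi : 'cV[R]_n -> 'cV[R]_n * 'cV[R]_n) : Prop :=
  (forall x v, 'D_v phi x = 0 -> v = 0) /\
  (forall x u v, twoform w ('D_u phi x) ('D_v phi x) = 0).

Definition pullback2 (M : 'M[R]_n) (phi : 'cV[R]_n -> 'cV[R]_n * 'cV[R]_n)
  (x : 'cV[R]_n) (j l : 'I_n) : R :=
  twoform M ('D_(ebasis j) phi x) ('D_(ebasis l) phi x).

(* A connection  d + alpha  on the trivial line bundle over the submanifold, with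
   complex 1-form alpha = sum_l (are l x + i aim l x) dx^l in the coordinates x.
   Its curvature is d alpha, with coefficients
   (d alpha)(d/dx^j, d/dx^l) = d_j alpha_l - d_l alpha_j. *)
Definition curvature (are aim : 'I_n -> 'cV[R]_n -> R)
  (x : 'cV[R]_n) (j l : 'I_n) : R[i] :=
  (('D_(ebasis j) (are l) x - 'D_(ebasis l) (are j) x) +i*
   ('D_(ebasis j) (aim l) x - 'D_(ebasis l) (aim j) x))%C.

Definition Fukaya_object (T : 'M[R[i]]_n)
  (phi : 'cV[R]_n -> 'cV[R]_n * 'cV[R]_n)
  (are aim : 'I_n -> 'cV[R]_n -> R) : Prop :=
  is_Lagrangian (omega_mx T) phi /\
  (forall x j l, curvature are aim x j l =
     ((0 +i* (2 * pi)) * (pullback2 (B_mx T) phi x j l)%:C)%C).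

Definition intmx (A : 'M[int]_n) : 'M[R]_n := map_mx (fun z : int => z%:~R) A.
Definition intmxC (A : 'M[int]_n) : 'M[R[i]]_n := map_mx (fun z : int => z%:~R) A.

(* L_(r,A,p): image in T^{2n} of {(x,y) : y = (1/r) A x + (1/r) p}, parametrized
   (on the universal cover) by x |-> (x, (1/r) A x + (1/r) p). *)
Definition L_param (r : nat) (A : 'M[int]_n) (p : 'cV[R]_n)
  (x : 'cV[R]_n) : 'cV[R]_n * 'cV[R]_n :=
  (x, (r%:R)^-1 *: (intmx A *m x) + (r%:R)^-1 *: p).

(* calL_(r,A,p,q): connection d - (i/(2 pi)) (1/r) q^t dx, i.e. alpha has zero
   real part and imaginary part coefficient -(1/(2 pi r)) q_l. *)
Definition calL_re (r : nat) (q : 'cV[R]_n) (l : 'I_n) (x : 'cV[R]_n) : R := 0.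
Definition calL_im (r : nat) (q : 'cV[R]_n) (l : 'I_n) (x : 'cV[R]_n) : R :=
  - ((2 * pi)^-1 * (r%:R)^-1 * q l 0).

End Defs.

From HB Require Import structures.
From mathcomp Require Import all_boot all_order all_algebra.
From mathcomp Require Import all_classical all_reals all_analysis.
From mathcomp Require Import complex.
Import Order.TTheory GRing.Theory Num.Theory.
Import numFieldNormedType.Exports.
Local Open Scope ring_scope.

(** The parametrization of [L] is affine, with differential
  [v |-> (v, A v / r)], so the pull-back of [dx^t M dy] to [L] is the
  antisymmetric part [(M A - (M A)^t) / r]; and the connection of [calL] has
  constant coefficients, hence is flat.  The pair is thus an object exactly
  when [omega A] and [B A] are symmetric, i.e. when the complex matrix
  [(-T^-1)^t A] is symmetric.  Congruence by [T] transforms it into [- A T],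
  and congruence by an invertible matrix preserves symmetry. *)

Lemma derive_affine (R : numFieldType) (V W : normedModType R) (f : V -> W)
    (a v : V) (d : W) :
  (forall h : R, h != 0 -> f (h *: v + a) - f a = h *: d) -> 'D_v f a = d.
Proof.
move=> f_incr; apply: (cvg_lim (@norm_hausdorff _ _)); apply: cvg_near_cst.
near=> h; have h_neq0 : h != 0 by near: h; exact: nbhs_dnbhs_neq.
by rewrite /= f_incr // scalerA mulVf // scale1r.
Unshelve. all: by end_near.
Qed.

Lemma sym_mxN {R : zmodType} {m} (X : 'M[R]_m) : - X = (- X)^T <-> X = X^T.
Proof. by rewrite raddfN /=; split=> [/oppr_inj | <-]. Qed.

Lemma sym_mx_congr {R : comUnitRingType} {m} (P X : 'M[R]_m) : P \in unitmx ->
  P^T *m X *m P = (P^T *m X *m P)^T <-> X = X^T.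
Proof.
move=> P_unit; have PT_unit : P^T \in unitmx by rewrite unitmx_tr.
rewrite !trmx_mul trmxK -!mulmxA.
by split=> [/(can_inj (mulKmx PT_unit))/(can_inj (mulmxK P_unit)) | <-].
Qed.

Lemma sym_mx_subr_eq0 {R : zmodType} {m} (X : 'M[R]_m) : X = X^T <-> X - X^T = 0.
Proof. by split=> [<- | /subr0_eq //]; rewrite subrr. Qed.

Lemma sym_mx_invT_mul {R : comUnitRingType} {m} (T X : 'M[R]_m) : T \in unitmx ->
  (- invmx T)^T *m X = ((- invmx T)^T *m X)^T <-> X *m T = (X *m T)^T.
Proof.
move=> T_unit; apply: (iff_trans (iff_sym (sym_mx_congr _ _ T_unit))).
have -> : T^T *m ((- invmx T)^T *m X) *m T = - (X *m T).
  by rewrite raddfN /= mulNmx mulmxN mulNmx mulmxA -trmx_mul mulVmx // trmx1 mul1mx.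
exact: sym_mxN.
Qed.

Lemma two_pi_i_mul_eq0 {R : realType} (b : R) :
  ((0 +i* (2 * pi)) * b%:C)%C = 0 <-> b = 0.
Proof.
split=> [/eqP | ->]; last by rewrite rmorph0 mulr0.
rewrite mulf_eq0 fmorph_eq0 eq_complex /= mulf_eq0 pnatr_eq0 /=.
by rewrite (negbTE (lt0r_neq0 (pi_gt0 R))) andbF => /eqP.
Qed.

Section ComplexMatrix.
Context {R : realType} {n : nat}.

Lemma intmxC_real (A : 'M[int]_n) :
  intmxC R A = map_mx (real_complex R) (intmx R A).
Proof. by apply/matrixP => i j; rewrite !mxE rmorph_int. Qed.

Lemma re_mx_mul_real (X : 'M[R[i]]_n) (Y : 'M[R]_n) :
  re_mx (X *m map_mx (real_complex R) Y) = re_mx X *m Y.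
Proof.
apply/matrixP => i j; rewrite !mxE raddf_sum; apply: eq_bigr => k _.
by rewrite !mxE; case: (X i k) => a b /=; rewrite mulr0 subr0.
Qed.

Lemma im_mx_mul_real (X : 'M[R[i]]_n) (Y : 'M[R]_n) :
  im_mx (X *m map_mx (real_complex R) Y) = im_mx X *m Y.
Proof.
apply/matrixP => i j; rewrite !mxE raddf_sum; apply: eq_bigr => k _.
by rewrite !mxE; case: (X i k) => a b /=; rewrite mulr0 add0r.
Qed.

Lemma sym_mx_im_re (X : 'M[R[i]]_n) :
  X = X^T <-> im_mx X = (im_mx X)^T /\ re_mx X = (re_mx X)^T.
Proof.
rewrite /re_mx /im_mx !map_trmx; split=> [<- // | [/matrixP im /matrixP re]].
apply/matrixP => j l; move: (im j l) (re j l); rewrite !mxE.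
by case: (X j l) => a b; case: (X l j) => a' b' /= -> ->.
Qed.

End ComplexMatrix.

Section AffineLagrangian.
Context {R : realType} {n : nat}.

Lemma derive_L_param r (A : 'M[int]_n) (p x v : 'cV[R]_n) :
  'D_v (L_param r A p) x = (v, r%:R^-1 *: (intmx R A *m v)).
Proof.
apply: derive_affine => h _; rewrite /L_param.
apply: injective_projections => /=; first exact: addrK.
rewrite mulmxDr scalerDr -[_ *: (_ *m (h *: v)) + _ + _]addrA addrK.
by rewrite -scalemxAr !scalerA mulrC.
Qed.

Lemma twoform_graph (M N : 'M[R]_n) (c : R) (u v : 'cV[R]_n) :
  twoform M (u, c *: (N *m u)) (v, c *: (N *m v)) =
  c * (u^T *m (M *m N - (M *m N)^T) *m v) 0 0.
Proof.
have tr_1x1 (Y : 'M[R]_1) : Y^T = Y by apply/matrixP => i j; rewrite mxE !ord1.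
rewrite /twoform /= -!scalemxAr -scalerBr mxE; congr (_ * _).
rewrite mulmxBr mulmxBl -[u^T *m (M *m N)^T *m v]tr_1x1.
by rewrite !trmx_mul !trmxK !mulmxA.
Qed.

Lemma ebasis_form (K : 'M[R]_n) j l :
  ((ebasis R j)^T *m K *m ebasis R l) 0 0 = K j l.
Proof. by rewrite /ebasis trmx_delta -rowE -colE !mxE. Qed.

Lemma pullback2_L_param (M : 'M[R]_n) r A p x j l :
  pullback2 M (L_param r A p) x j l =
  r%:R^-1 * (M *m intmx R A - (M *m intmx R A)^T) j l.
Proof. by rewrite /pullback2 !derive_L_param twoform_graph ebasis_form. Qed.

Lemma pullback2_L_param_eq0 (M : 'M[R]_n) r A p : (0 < r)%N ->
  (forall x j l, pullback2 M (L_param r A p) x j l = 0) <->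
  M *m intmx R A = (M *m intmx R A)^T.
Proof.
move=> r_gt0; have r_neq0 : r%:R^-1 != 0 :> R by rewrite invr_eq0 pnatr_eq0 -lt0n.
split=> [pb0 | /sym_mx_subr_eq0 K0 x j l]; last by rewrite pullback2_L_param K0 mxE mulr0.
apply/sym_mx_subr_eq0/matrixP => j l; rewrite [RHS]mxE.
by have /eqP := pb0 0 j l; rewrite pullback2_L_param mulf_eq0 (negbTE r_neq0) => /eqP.
Qed.

Lemma L_param_Lagrangian (w : 'M[R]_n) r A p : (0 < r)%N ->
  is_Lagrangian w (L_param r A p) <-> w *m intmx R A = (w *m intmx R A)^T.
Proof.
move=> r_gt0; split=> [[_ isotropic] | sym].
  by apply/(pullback2_L_param_eq0 w r A p r_gt0) => x j l; apply: isotropic.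
split=> [x v | x u v]; first by rewrite derive_L_param => /(congr1 fst).
move/sym_mx_subr_eq0: sym => K0.
by rewrite !derive_L_param twoform_graph K0 mulmx0 mul0mx mxE mulr0.
Qed.

Lemma curvature_cst (a b : 'I_n -> R) x j l :
  curvature (fun l _ => a l) (fun l _ => b l) x j l = 0.
Proof. by rewrite /curvature !derive_cst !subrr. Qed.

Lemma calL_curvature_eq (M : 'M[R]_n) r A p q : (0 < r)%N ->
  (forall x j l, curvature (calL_re r q) (calL_im r q) x j l =
     ((0 +i* (2 * pi)) * (pullback2 M (L_param r A p) x j l)%:C)%C) <->
  M *m intmx R A = (M *m intmx R A)^T.
Proof.
move=> r_gt0.
have flat x j l : curvature (calL_re r q) (calL_im r q) x j l = 0.
  exact: (curvature_cst (fun=> 0) (fun l => - ((2 * pi)^-1 * r%:R^-1 * q l 0))).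
split=> [curv | sym x j l].
  apply/(pullback2_L_param_eq0 M r A p r_gt0) => x j l.
  by apply/two_pi_i_mul_eq0; rewrite -curv flat.
by rewrite flat (proj2 (pullback2_L_param_eq0 M r A p r_gt0) sym) rmorph0 mulr0.
Qed.

End AffineLagrangian.

Theorem proposition4p2 (R : realType) (n : nat) (T : 'M[R[i]]_n)
  (r : nat) (A : 'M[int]_n) (p q : 'cV[R]_n) :
  (1 <= n)%N -> T \in unitmx -> posdef (im_mx T) -> (0 < r)%N ->
  (Fukaya_object T (L_param r A p) (calL_re r q) (calL_im r q) <->
   intmxC R A *m T = (intmxC R A *m T)^T).
Proof.
move=> _ T_unit _ r_gt0.
apply: (iff_trans _ (sym_mx_invT_mul _ _ T_unit)).
apply: (iff_trans _ (iff_sym (sym_mx_im_re _))).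
rewrite intmxC_real im_mx_mul_real re_mx_mul_real -/(omega_mx T) -/(B_mx T).
have Lagrangian_iff := L_param_Lagrangian (omega_mx T) r A p r_gt0.
have curvature_iff := calL_curvature_eq (B_mx T) r A p q r_gt0.
by rewrite /Fukaya_object; tauto.
Qed.
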